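(* A presheaf $X$ of sets on $\mathscr{V}_f$ is finite if and only if $|X(0)|<\infty$ and, for each $x\in X(0)$, there exist a constant-free finite functor $F_x\in\mathscr{F}$ and a monomorphism of presheaves $X_x\hookrightarrow F_x$.
   Context: $p$ prime, $\mathbb{F}=\mathbb{F}_p$, $\mathscr{V}_f$ finite-dimensional $\mathbb{F}$-vector spaces; presheaves are contravariant functors $\mathscr{V}_f\to$ Sets. $\mathscr{F}$ is the abelian category of functors $\mathscr{V}_f^{\mathrm{op}}\to$ ($\mathbb{F}$-vector spaces), regarded as presheaves of sets by forgetting structure; $F\in\mathscr{F}$ is finite if it has a finite composition series and constant-free if $F(0)=0$. A presheaf $X$ is finite if there is a monomorphism $X\hookrightarrow F_X$ with $F_X\in\mathscr{F}$ finite. For $x\in X(0)$, $X_x\subset X$ is the subpresheaf with $X_x(V)$ the fibre over $x$ of the map $X(V)\to X(0)$ induced by $0\hookrightarrow V$. *)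

From HB Require Import structures.
From mathcomp Require Import all_boot all_algebra.
From Stdlib Require Import ProofIrrelevance.
Set Implicit Arguments. Unset Strict Implicit.
Import GRing.Theory.
Local Open Scope ring_scope.

(* Skeleton of V_f : objects are naturals n (standing for F^n = 'rV['F_p]_n),
   a morphism n -> m is a matrix A : 'M['F_p]_(n,m), acting v |-> v *m A.
   Identity is 1%:M and the composite g o f (f : n -> m, g : m -> k) is f *m g. *)

Section Presheaves.
Variable q : nat.
Local Notation K := 'F_q.

Record presheaf := Presheaf {
  ps_obj :> nat -> Type;
  ps_map : forall n m, 'M[K]_(n, m) -> ps_obj m -> ps_obj n;
  ps_id : forall n (x : ps_obj n), ps_map 1%:M x = x;
  ps_comp : forall n m k (f : 'M[K]_(n, m)) (g : 'M[K]_(m, k)) (x : ps_obj k),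
      ps_map (f *m g) x = ps_map f (ps_map g x) }.


Arguments ps_map : clear implicits.
Arguments ps_map p {n m} f x.

Record vfunctor := VFunctor {
  vf_obj : nat -> lmodType K;
  vf_map : forall n m, 'M[K]_(n, m) -> {linear vf_obj m -> vf_obj n};
  vf_id : forall n (x : vf_obj n), vf_map 1%:M x = x;
  vf_comp : forall n m k (f : 'M[K]_(n, m)) (g : 'M[K]_(m, k)) (x : vf_obj k),
      vf_map (f *m g) x = vf_map f (vf_map g x) }.


Arguments vf_map : clear implicits.
Arguments vf_map v {n m}.

Definition forget (G : vfunctor) : presheaf :=
  @Presheaf (fun n => (vf_obj G n : Type)) (fun n m f x => vf_map G f x)
    (@vf_id G) (@vf_comp G).

Definition is_mono (X Y : presheaf) : Prop :=
  exists a : forall n, X n -> Y n,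
    (forall n m (f : 'M[K]_(n, m)) (x : X m), a n (ps_map X f x) = ps_map Y f (a m x))
    /\ (forall n, injective (a n)).

Definition is_subfunctor (G : vfunctor) (S : forall n, vf_obj G n -> Prop) : Prop :=
  [/\ (forall n, S n 0),
      (forall n u v, S n u -> S n v -> S n (u + v)),
      (forall n (c : K) u, S n u -> S n (c *: u)) &
      (forall n m (f : 'M[K]_(n, m)) u, S m u -> S n (vf_map G f u))].

Definition sub_le (G : vfunctor) (S T : forall n, vf_obj G n -> Prop) : Prop :=
  forall n u, S n u -> T n u.

(* F is finite: it has a finite composition series
   0 = S_0 < S_1 < ... < S_k = F with each S_{i+1}/S_i simple, i.e.
   S_i is properly contained in S_{i+1} and no subfunctor lies strictly between. *)
Definition finite_functor (G : vfunctor) : Prop :=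
  exists (k : nat) (S : nat -> forall n, vf_obj G n -> Prop),
    [/\ (forall i, (i <= k)%N -> is_subfunctor (S i)),
        (forall n u, S 0%N n u <-> u = 0),
        (forall n u, S k n u) &
        (forall i, (i < k)%N ->
           [/\ sub_le (S i) (S i.+1),
               ~ sub_le (S i.+1) (S i) &
               forall T, is_subfunctor T -> sub_le (S i) T -> sub_le T (S i.+1) ->
                 sub_le T (S i) \/ sub_le (S i.+1) T])].

Definition constant_free (G : vfunctor) : Prop := forall u : vf_obj G 0, u = 0.

Definition finite_presheaf (X : presheaf) : Prop :=
  exists G : vfunctor, finite_functor G /\ is_mono X (forget G).

(* the subpresheaf X_x: fibre over x of X(V) -> X(0) induced by 0 -> V *)
Section Fibre.
Variables (X : presheaf) (x : X 0%N).

Definition fib_obj n := {y : X n | ps_map X (0 : 'M[K]_(0, n)) y = x}.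

Lemma fib_stable n m (f : 'M[K]_(n, m)) (y : X m) :
  ps_map X (0 : 'M[K]_(0, m)) y = x -> ps_map X (0 : 'M[K]_(0, n)) (ps_map X f y) = x.
Proof. by move=> <-; rewrite -ps_comp mul0mx. Qed.

Definition fib_map n m (f : 'M[K]_(n, m)) (y : fib_obj m) : fib_obj n :=
  exist _ (ps_map X f (sval y)) (fib_stable f (svalP y)).

Lemma fib_id n (y : fib_obj n) : fib_map 1%:M y = y.
Proof. by case: y => y hy; apply: eq_sig_hprop => [z ? ?|/=]; [apply: proof_irrelevance|rewrite ps_id]. Qed.

Lemma fib_comp n m k (f : 'M[K]_(n, m)) (g : 'M[K]_(m, k)) (y : fib_obj k) :
  fib_map (f *m g) y = fib_map f (fib_map g y).
Proof. by case: y => y hy; apply: eq_sig_hprop => [z ? ?|/=]; [apply: proof_irrelevance|rewrite ps_comp]. Qed.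

Definition fibre : presheaf := Presheaf fib_id fib_comp.
End Fibre.

End Presheaves.

From HB Require Import structures.
From mathcomp Require Import all_boot all_algebra.
From mathcomp Require Import boolp.
Set Implicit Arguments.
Unset Printing Implicit Defensive.
Import GRing.Theory.
Local Open Scope ring_scope.

(* Along a composition series of a finite [F], each simple factor adds at most one
   dimension at [0]: a vector of [S_(i+1)(0)] outside [S_i(0)] generates [S_(i+1)]
   together with [S_i].  Hence [F(0)] is finite, and so is [X(0)] when [X] embeds in
   [F].  The fibre [X_x] embeds in the kernel of [F -> F(0)] by
   [y |-> a(y) - F(0 -> V)(a(x))]; that kernel is constant-free and finite, since the
   preimage of a composition series along any morphism is a composition series with
   repetitions.  Conversely, [X] embeds in the finite product over [x] in [X(0)] of
   [F_x x K], [K] the constant functor of the field: each [X_x -> F_x] is extended by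
   zero, and the factor [K] records the indicator of [X_x]. *)

Section Finiteness.
Variable q : nat.
Local Notation K := 'F_q.
Local Notation subpred G := (forall n, vf_obj G n -> Prop).

Lemma vf_map00 {G : vfunctor q} (u : vf_obj G 0) : vf_map G (0 : 'M[K]_(0, 0)) u = u.
Proof. by rewrite -(flatmx0 1%:M) vf_id. Qed.

Lemma vf_map0_comp {G : vfunctor q} n m (f : 'M[K]_(n, m)) (u : vf_obj G m) :
  vf_map G (0 : 'M_(0, n)) (vf_map G f u) = vf_map G 0 u.
Proof. by rewrite -vf_comp mul0mx. Qed.

Section Lattice.
Variable G : vfunctor q.
Implicit Types A B T : subpred G.

Lemma subpred_ext A B : (forall n u, A n u <-> B n u) -> A = B.
Proof.
move=> AB; apply: functional_extensionality_dep => n.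
by apply: funext => u; apply: propext.
Qed.

Definition sub0 : subpred G := fun n u => u = 0.
Definition subT : subpred G := fun _ _ => True.

Lemma is_subfunctor0 : is_subfunctor sub0.
Proof.
split=> [n | n _ _ -> -> | n c _ -> | n m f _ ->] //=; rewrite /sub0.
- by rewrite addr0.
- by rewrite scaler0.
- by rewrite raddf0.
Qed.

Definition sub_add A B : subpred G :=
  fun n u => exists a b, [/\ A n a, B n b & u = a + b].

Lemma is_subfunctor_add A B :
  is_subfunctor A -> is_subfunctor B -> is_subfunctor (sub_add A B).
Proof.
move=> [A0 AD AZ AM] [B0 BD BZ BM]; split.
- by move=> n; exists 0, 0; rewrite addr0.
- move=> n _ _ [a [b [Aa Bb ->]]] [a' [b' [Aa' Bb' ->]]].
  by exists (a + a'), (b + b'); rewrite addrACA; split; [apply: AD | apply: BD |].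
- move=> n c _ [a [b [Aa Bb ->]]].
  by exists (c *: a), (c *: b); rewrite scalerDr; split; [apply: AZ | apply: BZ |].
- move=> n m f _ [a [b [Aa Bb ->]]].
  exists (vf_map G f a), (vf_map G f b); rewrite raddfD.
  by split; [apply: AM | apply: BM |].
Qed.

(* [B/A] is simple or zero. *)
Definition weak_cover A B := sub_le A B /\
  forall T, is_subfunctor T -> sub_le A T -> sub_le T B -> sub_le T A \/ sub_le B T.

Definition cover A B := weak_cover A B /\ ~ sub_le B A.

Definition weak_chain k (S : nat -> subpred G) :=
  (forall i, (i <= k)%N -> is_subfunctor (S i)) /\
  (forall i, (i < k)%N -> weak_cover (S i) (S i.+1)).

Lemma weak_chain_strict k S : weak_chain k S ->
  exists k' S', [/\ S' 0%N = S 0%N, S' k' = S k,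
    forall i, (i <= k')%N -> is_subfunctor (S' i) &
    forall i, (i < k')%N -> cover (S' i) (S' i.+1)].
Proof.
elim: k => [|k IH] [Ssub Sstep]; first by exists 0%N, S.
have [|k' [S' [S'0 S'k S'sub S'step]]] := IH.
  by split=> i ik; [apply: Ssub; apply: leqW | apply: Sstep; apply: ltnW].
have [Sle Sgap] := Sstep k (ltnSn k).
have [Sback | Snot] := pselect (sub_le (S k.+1) (S k)).
  exists k', S'; split=> //; rewrite S'k.
  by apply: subpred_ext => n u; split; [apply: Sle | apply: Sback].
exists k'.+1, (fun i => if (i <= k')%N then S' i else S k.+1); split.
- by [].
- by rewrite ltnn.
- by move=> i _; case: ifP => [/S'sub | _] //; apply: Ssub.
move=> i; rewrite ltnS => ik; have [ik' | k'i] := ltnP i k'.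
  by rewrite ik; apply: S'step.
have -> : i = k' by apply/eqP; rewrite eqn_leq ik k'i.
by rewrite leqnn S'k.
Qed.

Lemma finite_functorP :
  finite_functor G <-> exists k S, [/\ weak_chain k S, S 0%N = sub0 & S k = subT].
Proof.
split=> [[k [S [Ssub S0 Sk Sstep]]] | [k [S [Sch S0 Sk]]]].
  exists k, S; split; [split | exact: subpred_ext | exact: subpred_ext] => //.
  by move=> i /Sstep [].
have [k' [S' [S'0 S'k S'sub S'step]]] := weak_chain_strict Sch.
exists k', S'; split=> // [n u | n u | i /S'step [[] //]]; first by rewrite S'0 S0.
by rewrite S'k Sk.
Qed.

Definition chain_cat k1 (S1 S2 : nat -> subpred G) i :=
  if (i <= k1)%N then S1 i else S2 (i - k1)%N.

Lemma chain_cat_r k1 S1 S2 i : S1 k1 = S2 0%N -> (k1 <= i)%N ->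
  chain_cat k1 S1 S2 i = S2 (i - k1)%N.
Proof.
rewrite /chain_cat => S12 k1i; case: ifP => // ik1.
have -> : i = k1 by apply/eqP; rewrite eqn_leq ik1 k1i.
by rewrite subnn.
Qed.

Lemma weak_chain_cat k1 k2 S1 S2 :
  weak_chain k1 S1 -> weak_chain k2 S2 -> S1 k1 = S2 0%N ->
  weak_chain (k1 + k2)%N (chain_cat k1 S1 S2).
Proof.
move=> [S1sub S1step] [S2sub S2step] S12.
split=> i ik.
  rewrite /chain_cat; case: leqP => [ik1 | k1i]; first exact: S1sub.
  by apply: S2sub; rewrite leq_subLR.
case: (ltnP i k1) => [ik1 | k1i].
  by rewrite /chain_cat (ltnW ik1) ik1; apply: S1step.
rewrite !chain_cat_r ?(leqW k1i) // subSn //.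
by apply: S2step; rewrite ltn_subLR.
Qed.

End Lattice.
Arguments sub_add {G}.
Arguments weak_cover {G}.
Arguments weak_chain {G}.
Arguments chain_cat {G}.

Section Morphism.
Variables (H G : vfunctor q) (phi : forall n, {linear vf_obj H n -> vf_obj G n}).
Hypothesis phi_nat :
  forall n m (f : 'M[K]_(n, m)) u, phi n (vf_map H f u) = vf_map G f (phi m u).

Definition sub_image (A : subpred H) : subpred G :=
  fun n v => exists2 u, A n u & v = phi n u.
Definition sub_preim (B : subpred G) : subpred H := fun n u => B n (phi n u).

Lemma is_subfunctor_image (A : subpred H) :
  is_subfunctor A -> is_subfunctor (sub_image A).
Proof.
move=> [A0 AD AZ AM]; split.
- by move=> n; exists 0; rewrite ?raddf0.
- by move=> n _ _ [u Au ->] [v Av ->]; exists (u + v); rewrite ?raddfD //; apply: AD.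
- by move=> n c _ [u Au ->]; exists (c *: u); rewrite ?linearZ //; apply: AZ.
- by move=> n m f _ [u Au ->]; exists (vf_map H f u); rewrite ?phi_nat //; apply: AM.
Qed.

Lemma is_subfunctor_preim (B : subpred G) :
  is_subfunctor B -> is_subfunctor (sub_preim B).
Proof.
move=> [B0 BD BZ BM]; split=> [n | n u v | n c u | n m f u]; rewrite /sub_preim.
- by rewrite raddf0.
- by rewrite raddfD; apply: BD.
- by rewrite linearZ; apply: BZ.
- by rewrite phi_nat; apply: BM.
Qed.

(* [phi^-1 B / phi^-1 A] embeds in [B / A]. *)
Lemma weak_cover_preim (A B : subpred G) : is_subfunctor A -> is_subfunctor B ->
  weak_cover A B -> weak_cover (sub_preim A) (sub_preim B).
Proof.
move=> Asub Bsub [AB Agap]; split=> [n u /AB // | T Tsub AT TB].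
have [A0 _ _ _] := Asub; have [_ BD _ _] := Bsub; have [T0 TD _ _] := Tsub.
pose U := sub_add A (sub_image T).
have Usub : is_subfunctor U.
  by apply: is_subfunctor_add => //; apply: is_subfunctor_image.
have imT n t : T n t -> sub_image T n (phi n t) by exists t.
have AU : sub_le A U.
  move=> n a Aa; exists a, 0; split; rewrite ?addr0 //.
  by rewrite -(raddf0 (phi n)); apply: imT.
have UB : sub_le U B.
  by move=> n _ [a [_ [Aa [t Tt ->] ->]]]; apply: BD; [apply: AB | apply: TB].
have [UA | BU] := Agap U Usub AU UB; [left | right].
  move=> n t Tt; apply: UA; exists 0, (phi n t); split; rewrite ?add0r //.
  exact: imT.
move=> n h Bh; have [a [_ [Aa [t Tt ->] e]]] := BU n (phi n h) Bh.
have Aht : sub_preim A n (h - t) by rewrite /sub_preim linearB /= e addrK.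
by rewrite -(subrK t h); apply: TD => //; apply: AT.
Qed.

Lemma weak_chain_preim k (S : nat -> subpred G) :
  weak_chain k S -> weak_chain k (fun i => sub_preim (S i)).
Proof.
move=> [Ssub Sstep]; split=> i ik; first exact/is_subfunctor_preim/Ssub.
by apply: weak_cover_preim; [apply/Ssub/ltnW | apply: Ssub | apply: Sstep].
Qed.

Hypothesis phi_inj : forall n, injective (phi n).

Lemma weak_cover_image (A B : subpred H) :
  weak_cover A B -> weak_cover (sub_image A) (sub_image B).
Proof.
move=> [AB Agap]; split=> [n _ [u /AB Bu ->] | T Tsub AT TB]; first by exists u.
have [||TA | BT] := Agap (sub_preim T) (is_subfunctor_preim Tsub).
- by move=> n a Aa; apply: AT; exists a.
- by move=> n u /TB [b Bb /phi_inj ->].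
- left=> n v Tv; have [b _ vE] := TB n v Tv.
  by exists b => //; apply: TA; rewrite /sub_preim -vE.
- by right=> n _ [b /BT Tb ->].
Qed.

Lemma weak_chain_image k (S : nat -> subpred H) :
  weak_chain k S -> weak_chain k (fun i => sub_image (S i)).
Proof.
move=> [Ssub Sstep]; split=> i ik; first exact/is_subfunctor_image/Ssub.
exact/weak_cover_image/Sstep.
Qed.

End Morphism.
Arguments sub_image {H G}.
Arguments sub_preim {H G}.

Section SubVfunctor.
Variables (G : vfunctor q) (S : subpred G).
Hypothesis S_sub : is_subfunctor S.

Definition sub_mem n : pred (vf_obj G n) := fun u => `[< S n u >].

Lemma sub_mem_closed n : submod_closed (sub_mem n).
Proof.
have [S0 SD SZ _] := S_sub.
split=> [|c u v]; rewrite !unfold_in; first exact/asboolP.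
move=> /asboolP Su /asboolP Sv; apply/asboolP; apply: SD => //; exact: SZ.
Qed.

HB.instance Definition _ n :=
  GRing.isSubmodClosed.Build K (vf_obj G n) (sub_mem n) (sub_mem_closed n).
Definition sub_obj n := {u : vf_obj G n | sub_mem n u}.
HB.instance Definition _ n := [isSub of sub_obj n for @sval _ _].
HB.instance Definition _ n := [Choice of sub_obj n by <:].
HB.instance Definition _ n := [SubChoice_isSubLmodule of sub_obj n by <:].

Lemma sub_mem_map n m (f : 'M[K]_(n, m)) (u : sub_obj m) :
  sub_mem n (vf_map G f (val u)).
Proof. by have [_ _ _ SM] := S_sub; apply/asboolP/SM/asboolP; case: u. Qed.

Definition sub_map n m (f : 'M[K]_(n, m)) (u : sub_obj m) : sub_obj n :=
  Sub (vf_map G f (val u)) (sub_mem_map f u).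

Lemma sub_map_is_linear n m (f : 'M[K]_(n, m)) : linear (sub_map f).
Proof. by move=> c u v; apply: val_inj; rewrite /= linearP. Qed.

HB.instance Definition _ n m f :=
  GRing.isLinear.Build K (sub_obj m) (sub_obj n) _ (@sub_map n m f) (sub_map_is_linear f).

Lemma sub_map_id n (u : sub_obj n) : sub_map 1%:M u = u.
Proof. by apply: val_inj; rewrite /= vf_id. Qed.

Lemma sub_map_comp n m k (f : 'M[K]_(n, m)) (g : 'M[K]_(m, k)) (u : sub_obj k) :
  sub_map (f *m g) u = sub_map f (sub_map g u).
Proof. by apply: val_inj; rewrite /= vf_comp. Qed.

Definition sub_vfunctor : vfunctor q := VFunctor sub_map_id sub_map_comp.

Definition sub_incl n : {linear vf_obj sub_vfunctor n -> vf_obj G n} := val.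

Lemma finite_sub_vfunctor : finite_functor G -> finite_functor sub_vfunctor.
Proof.
move=> /finite_functorP [k [T [Tch T0 Tk]]]; apply/finite_functorP.
exists k, (fun i => sub_preim sub_incl (T i)); split; last by rewrite Tk.
  by apply: weak_chain_preim.
rewrite T0; apply: subpred_ext => n u.
by split=> [u0 | ->]; [apply: val_inj | rewrite /sub_preim raddf0].
Qed.

End SubVfunctor.

Definition const_vfunctor (V : lmodType K) : vfunctor q :=
  @VFunctor q (fun _ => V) (fun _ _ _ => idfun) (fun _ _ => erefl)
    (fun _ _ _ _ _ _ => erefl).

Lemma finite_const_field : finite_functor (const_vfunctor K^o).
Proof.
apply/finite_functorP.
exists 1%N, (fun i => if i == 0%N then sub0 _ else subT _); split=> //.
split=> [[|[|i]] // _ | [|i] // _]; first exact: is_subfunctor0.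
split=> // T [_ _ TZ TM] _ _.
have [[n [u [Tu u0]]] | Tno] := pselect (exists n u, T n u /\ u != 0).
  right=> m v _; have := TZ m (v / u) u (TM m n 0 u Tu).
  by rewrite [_ *: _]divfK.
left=> n u Tu; apply: contrapT => u0; apply: Tno; exists n, u; split=> //.
exact/eqP.
Qed.

Section Product.
Variables G1 G2 : vfunctor q.

Definition prod_map n m (f : 'M[K]_(n, m)) (w : vf_obj G1 m * vf_obj G2 m) :
  vf_obj G1 n * vf_obj G2 n := (vf_map G1 f w.1, vf_map G2 f w.2).

Lemma prod_map_is_linear n m (f : 'M[K]_(n, m)) : linear (prod_map f).
Proof. by move=> c [u1 u2] [v1 v2]; rewrite /prod_map /= !linearP. Qed.

HB.instance Definition _ n m f :=
  GRing.isLinear.Build K _ _ _ (@prod_map n m f) (prod_map_is_linear f).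

Lemma prod_map_id n (w : vf_obj G1 n * vf_obj G2 n) : prod_map 1%:M w = w.
Proof. by case: w => u v; rewrite /prod_map !vf_id. Qed.

Lemma prod_map_comp n m k (f : 'M[K]_(n, m)) (g : 'M[K]_(m, k)) w :
  prod_map (f *m g) w = prod_map f (prod_map g w).
Proof. by rewrite /prod_map !vf_comp. Qed.

Definition prod_vfunctor : vfunctor q := VFunctor prod_map_id prod_map_comp.

Definition inl_vf n (u : vf_obj G1 n) : vf_obj G1 n * vf_obj G2 n := (u, 0).

Lemma inl_vf_is_linear n : linear (@inl_vf n).
Proof. by move=> c u v; apply/eqP; rewrite xpair_eqE /= scaler0 addr0 !eqxx. Qed.

HB.instance Definition _ n :=
  GRing.isLinear.Build K _ _ _ (@inl_vf n) (inl_vf_is_linear n).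

Lemma inl_vf_natural n m (f : 'M[K]_(n, m)) u :
  inl_vf n (vf_map G1 f u) = prod_map f (inl_vf m u).
Proof. by rewrite /prod_map /inl_vf /= raddf0. Qed.

(* The series [S1_i x 0], followed by [G1 x S2_j]. *)
Lemma finite_prod_vfunctor :
  finite_functor G1 -> finite_functor G2 -> finite_functor prod_vfunctor.
Proof.
move=> /finite_functorP [k1 [S1 [S1ch S10 S1k]]].
move=> /finite_functorP [k2 [S2 [S2ch S20 S2k]]].
pose L i := sub_image (fun n => inl_vf n : {linear _ -> vf_obj prod_vfunctor n}) (S1 i).
pose R j := sub_preim (fun n => snd : {linear vf_obj prod_vfunctor n -> _}) (S2 j).
have LR : L k1 = R 0%N.
  rewrite /L /R S1k S20; apply: subpred_ext => n [u v].
  by split=> [[u' _ [_ ->]] | /= v0]; last by exists u => //; rewrite [v]v0.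
apply/finite_functorP; exists (k1 + k2)%N, (chain_cat k1 L R); split.
- apply: weak_chain_cat LR; last exact: weak_chain_preim.
  by apply: weak_chain_image S1ch; [apply: inl_vf_natural | move=> n u v []].
- rewrite /chain_cat /L S10; apply: subpred_ext => n w.
  by split=> [[_ -> ->] | ->]; last by exists 0.
- by rewrite chain_cat_r ?leq_addr // addKn /R S2k.
Qed.

End Product.

Definition fin_cover (A : Type) (P : A -> Prop) :=
  exists (T : finType) (e : T -> A), forall y, P y -> exists t, e t = y.

Lemma fin_cover_inj (A B : Type) (f : A -> B) : injective f ->
  fin_cover (fun _ : B => True) -> fin_cover (fun _ : A => True).
Proof.
move=> f_inj [T [e eB]].
pose T' := {t : T | `[< exists y, f y = e t >]}.
exists T', (fun t : T' => sval (cid (asboolW (valP t)))).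
move=> y _; have [t ety] := eB (f y) I.
have Pt : `[< exists y, f y = e t >] by apply/asboolP; exists y.
by exists (exist _ t Pt); apply: f_inj; case: cid => y' /= ->.
Qed.

Lemma fin_cover_ord (A : Type) : fin_cover (fun _ : A => True) ->
  exists N (e : 'I_N -> A), forall y, exists i, e i = y.
Proof.
move=> [T [e eA]]; exists #|T|, (fun i => e (enum_val i)) => y.
by have [t <-] := eA y I; exists (enum_rank t); rewrite enum_rankK.
Qed.

Lemma fib_obj_inj (X : presheaf q) (x : X 0%N) n (y1 y2 : fib_obj x n) :
  sval y1 = sval y2 -> y1 = y2.
Proof. by move=> y12; apply: eq_sig_hprop => // *; apply: Prop_irrelevance. Qed.

Section LevelZero.
Variable G : vfunctor q.

Definition sub_gen0 (b : vf_obj G 0) : subpred G :=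
  fun n u => exists c : K, u = c *: vf_map G (0 : 'M_(n, 0)) b.

Lemma is_subfunctor_gen0 b : is_subfunctor (sub_gen0 b).
Proof.
split.
- by move=> n; exists 0; rewrite scale0r.
- by move=> n _ _ [c ->] [d ->]; exists (c + d); rewrite scalerDl.
- by move=> n c _ [d ->]; exists (c * d); rewrite scalerA.
- by move=> n m f _ [c ->]; exists c; rewrite linearZ /= -vf_comp mulmx0.
Qed.

(* A vector [b] of [B(0)] outside [A(0)] generates [B] together with [A], so that
   [B(0) = A(0) + K b]. *)
Lemma weak_cover_fin_cover0 (A B : subpred G) : is_subfunctor A -> is_subfunctor B ->
  weak_cover A B -> fin_cover (A 0%N) -> fin_cover (B 0%N).
Proof.
move=> Asub Bsub [AB Agap] [T [e eA]].
have [[b [Bb Ab]] | noB] := pselect (exists b, B 0%N b /\ ~ A 0%N b); last first.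
  by exists T, e => u Bu; apply: eA; apply: contrapT => Au; apply: noB; exists u.
have [A0 _ _ _] := Asub; have [_ BD BZ BM] := Bsub.
pose U := sub_add A (sub_gen0 b).
have Usub : is_subfunctor U.
  by apply: is_subfunctor_add => //; apply: is_subfunctor_gen0.
have AU : sub_le A U.
  by move=> n a Aa; exists a, 0; split; rewrite ?addr0 //; exists 0; rewrite scale0r.
have UB : sub_le U B.
  by move=> n _ [a [_ [Aa [c ->] ->]]]; apply: BD; [apply: AB | apply/BZ/BM].
have [UA | BU] := Agap U Usub AU UB.
  case: Ab; apply: UA; exists 0, b; split; rewrite ?add0r //.
  by exists 1; rewrite vf_map00 scale1r.
exists (T * K)%type, (fun tc => e tc.1 + tc.2 *: b) => u /BU [a [_ [Aa [c ->] ->]]].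
by have [t <-] := eA a Aa; exists (t, c); rewrite vf_map00.
Qed.

Lemma finite_fin_cover0 : finite_functor G -> fin_cover (fun _ : vf_obj G 0 => True).
Proof.
move=> /finite_functorP [k [S [[Ssub Sstep] S0 Sk]]].
suff /(_ k (leqnn k)) : forall i, (i <= k)%N -> fin_cover (S i 0%N) by rewrite Sk.
elim=> [|i IH] ik; first by rewrite S0; exists unit, (fun _ => 0) => u ->; exists tt.
apply: (weak_cover_fin_cover0 (Ssub i (ltnW ik)) (Ssub i.+1 ik) (Sstep i ik)).
exact: IH (ltnW ik).
Qed.

Definition at0 n : {linear vf_obj G n -> vf_obj (const_vfunctor (vf_obj G 0)) n} :=
  vf_map G (0 : 'M_(0, n)).

Definition ker0 : subpred G := sub_preim at0 (sub0 _).

Lemma is_subfunctor_ker0 : is_subfunctor ker0.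
Proof.
apply: is_subfunctor_preim; last exact: is_subfunctor0.
by move=> n m f u; rewrite vf_map0_comp.
Qed.

Lemma constant_free_ker0 : constant_free (sub_vfunctor is_subfunctor_ker0).
Proof.
by move=> u; apply: val_inj; rewrite -(vf_map00 (val u)); apply/asboolP; case: u.
Qed.

Lemma fibre_mono_ker0 (X : presheaf q) (x : X 0%N) :
  is_mono X (forget G) -> is_mono (fibre x) (forget (sub_vfunctor is_subfunctor_ker0)).
Proof.
move=> [a [a_nat a_inj]].
pose d n (y : fib_obj x n) := a n (sval y) - vf_map G (0 : 'M_(n, 0)) (a 0%N x).
have d_ker n y : sub_mem G ker0 n (d n y).
  apply/asboolP; rewrite /ker0 /sub_preim /sub0 /d linearB /= -vf_comp mul0mx.
  by rewrite vf_map00 -[vf_map _ _ _]a_nat (svalP y) subrr.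
exists (fun n y => exist _ (d n y) (d_ker n y)
                   : vf_obj (sub_vfunctor is_subfunctor_ker0) n).
split.
  move=> n m f y; apply: val_inj; rewrite /= /d linearB /= -vf_comp mulmx0.
  by rewrite [in LHS]a_nat.
by move=> n y1 y2 /(congr1 val) /addIr /a_inj /fib_obj_inj.
Qed.

End LevelZero.

Definition ps_natural (X Y : presheaf q) (a : forall n, X n -> Y n) :=
  forall n m (f : 'M[K]_(n, m)) (y : X m), a n (ps_map f y) = ps_map f (a m y).

Definition base {X : presheaf q} {n} (y : X n) : X 0%N := ps_map (0 : 'M[K]_(0, n)) y.

Lemma base_map (X : presheaf q) n m (f : 'M[K]_(n, m)) (y : X m) :
  base (ps_map f y) = base y.
Proof. by rewrite /base -ps_comp mul0mx. Qed.

Section Embedding.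
Variable X : presheaf q.

Definition injective_over (P : X 0%N -> Prop) {G : vfunctor q}
    (a : forall n, X n -> vf_obj G n) :=
  forall n y1 y2, P (base y1) -> P (base y2) -> a n y1 = a n y2 -> y1 = y2.

Section FibreTag.
Variables (x : X 0%N) (Gx : vfunctor q) (b : forall n, fib_obj x n -> vf_obj Gx n).
Hypotheses (b_nat : ps_natural (fibre x) (forget Gx) b)
  (b_inj : forall n, injective (@b n)).

Definition fibre_tag {n} (y : X n) : vf_obj Gx n * K^o :=
  match pselect (base y = x) with
  | left yx => (b (exist _ y yx), 1)
  | right _ => (0, 0)
  end.

Lemma fibre_tag_natural :
  ps_natural X (forget (prod_vfunctor Gx (const_vfunctor K^o))) (@fibre_tag).
Proof.
move=> n m f y; rewrite /fibre_tag /= /prod_map /=.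
case: pselect => [fyx | fyx]; case: pselect => [yx | yx] /=.
- by rewrite -[vf_map _ _ _]b_nat; congr (b _, _); apply: fib_obj_inj.
- by case: yx; rewrite -(base_map _ f).
- by case: fyx; rewrite base_map.
- by rewrite raddf0.
Qed.

Lemma fibre_tag_inj n (y1 y2 : X n) : base y1 = x ->
  fibre_tag y1 = fibre_tag y2 -> y1 = y2.
Proof.
rewrite /fibre_tag; case: pselect => // y1x _; case: pselect => [y2x | _] [].
  by move=> /b_inj /(congr1 sval).
by move=> _ /eqP; rewrite oner_eq0.
Qed.

End FibreTag.

Lemma injective_over_sub (P Q : X 0%N -> Prop) G (a : forall n, X n -> vf_obj G n) :
  (forall z, P z -> Q z) -> injective_over Q a -> injective_over P a.
Proof. by move=> PQ a_inj n y1 y2 /PQ Q1 /PQ Q2; apply: a_inj. Qed.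

Lemma injective_over_cons (P : X 0%N -> Prop) (x : X 0%N) G
    (a : forall n, X n -> vf_obj G n) :
  finite_functor G -> ps_natural X (forget G) a -> injective_over P a ->
  (exists Gx, finite_functor Gx /\ is_mono (fibre x) (forget Gx)) ->
  exists G' (a' : forall n, X n -> vf_obj G' n), [/\ finite_functor G',
    ps_natural X (forget G') a' & injective_over (fun z => z = x \/ P z) a'].
Proof.
move=> Gfin a_nat a_inj [Gx [Gxfin [b [b_nat b_inj]]]].
exists (prod_vfunctor G (prod_vfunctor Gx (const_vfunctor K^o))).
exists (fun n y => (a n y, fibre_tag Gx b y)); split.
- apply: finite_prod_vfunctor => //.
  by apply: finite_prod_vfunctor => //; apply: finite_const_field.
- by move=> n m f y; rewrite /= a_nat (fibre_tag_natural b_nat).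
move=> n y1 y2 [y1x | Py1] [y2x | Py2] [a12 tag12] //.
- exact: fibre_tag_inj tag12.
- exact: fibre_tag_inj tag12.
- by apply: esym; apply: fibre_tag_inj (esym tag12).
exact: a_inj a12.
Qed.

Lemma embed_fibres
    (hfib : forall x : X 0%N,
       exists Gx, finite_functor Gx /\ is_mono (fibre x) (forget Gx))
    N (e : 'I_N -> X 0%N) (s : seq 'I_N) :
  exists G (a : forall n, X n -> vf_obj G n), [/\ finite_functor G,
    ps_natural X (forget G) a & injective_over (fun z => exists2 i, i \in s & e i = z) a].
Proof.
elim: s => [|i s [G [a [Gfin a_nat a_inj]]]].
  exists (const_vfunctor K^o), (fun _ _ => 0).
  by split=> [||n y1 y2 []] //; apply: finite_const_field.
have [G' [a' [G'fin a'_nat a'_inj]]] :=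
  injective_over_cons Gfin a_nat a_inj (hfib (e i)).
exists G', a'; split=> //; apply: injective_over_sub a'_inj => z [j].
by rewrite in_cons => /orP[/eqP -> | js] <-; [left | right; exists j].
Qed.

End Embedding.

End Finiteness.

Theorem lemma3p2 (p : nat) (hp : prime p) (X : presheaf p) :
  finite_presheaf X <->
  (exists (N : nat) (e : 'I_N -> X 0%N), forall y : X 0%N, exists i, e i = y) /\
  (forall x : X 0%N, exists G : vfunctor p,
      [/\ constant_free G, finite_functor G & is_mono (fibre x) (forget G)]).
Proof.
split=> [[G [Gfin Xmono]] | [[N [e e_onto]] hfib]].
  split=> [|x].
    apply: fin_cover_ord; have [a [_ a_inj]] := Xmono.
    exact: fin_cover_inj (a_inj 0%N) (finite_fin_cover0 Gfin).
  exists (sub_vfunctor (is_subfunctor_ker0 G)); split.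
  - exact: constant_free_ker0.
  - exact: finite_sub_vfunctor.
  - exact: fibre_mono_ker0.
have hfib' (x : X 0%N) :
    exists Gx, finite_functor Gx /\ is_mono (fibre x) (forget Gx).
  by have [Gx [_ Gxfin Gxmono]] := hfib x; exists Gx.
have [G [a [Gfin a_nat a_inj]]] := embed_fibres hfib' e (enum 'I_N).
exists G; split=> //; exists a; split=> // n y1 y2; apply: a_inj.
- by have [i <-] := e_onto (base y1); exists i; rewrite ?mem_enum.
- by have [i <-] := e_onto (base y2); exists i; rewrite ?mem_enum.
Qed.
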